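(* Let $m\geq 11$ and $k\geq 1$ be integers and let $c(x)=1+\sum_{j\in\{1,3,4,5\}}(x^j+x^{m-j})\in\mathbb{F}_2[x]$. Then $\gcd(c(x^k),x^m-1)=1$ if and only if $\gcd(m,3k)=\gcd(m,k)$.
   Context: All polynomials are over $\mathbb{F}_2$. *)

From HB Require Import structures.
From mathcomp Require Import all_boot all_order all_algebra.
Set Implicit Arguments. Unset Strict Implicit. Unset Printing Implicit Defensive.
Import GRing.Theory.
Local Open Scope ring_scope.

Definition cpoly (m : nat) : {poly 'F_2} :=
  1 + \sum_(j <- [:: 1%N; 3%N; 4%N; 5%N]) ('X^j + 'X^(m - j)).

From HB Require Import structures.
From mathcomp Require Import all_boot all_order all_algebra.
From mathcomp Require Import ring zify.
Set Implicit Arguments. Unset Strict Implicit. Unset Printing Implicit Defensive.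
Import GRing.Theory.
Local Open Scope ring_scope.

(* Put y = x^k and M = x^m - 1.  Since M divides y^m - 1,
   computing modulo M we may replace y^(m-j) by y^(-j); clearing the
   denominators with the unit y^5 gives
       y^5 c(y) = (1 + y + y^2)^5 + (y^4 + y^2 + y + 1) (y^m - 1),
   where the Frobenius identity (1 + y + y^2)^4 = 1 + y^4 + y^8 of
   characteristic 2 is used.  As y is coprime to M, c(y) is coprime to M
   iff B = 1 + y + y^2 is.  Now (y - 1) B = x^(3k) - 1 with y - 1 and B
   coprime in characteristic 2, and gcd(x^a - 1, x^b - 1) = x^(gcd(a,b)) - 1,
   so B is coprime to M iff x^(gcd(m,3k)) - 1 and x^(gcd(m,k)) - 1 are
   associate, i.e. iff gcd(m,3k) = gcd(m,k). *)

Section CharTwo.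
Variable R : comPzRingType.
Hypothesis two0 : (2%:R : R) = 0.

Lemma sqrrD_char2 (a b : R) : (a + b) ^+ 2 = a ^+ 2 + b ^+ 2.
Proof. by rewrite sqrrD -mulr_natr two0 mulr0 addr0. Qed.

(* Fifth power of the trinomial, via (1 + y + y^2)^4 = 1 + y^4 + y^8. *)
Lemma trinomial_pow5 (y : R) : (1 + y + y ^+ 2) ^+ 5 =
  1 + y + y ^+ 2 + y ^+ 4 + y ^+ 5 + y ^+ 6 + y ^+ 8 + y ^+ 9 + y ^+ 10.
Proof.
have sq (z : R) : (1 + z + z ^+ 2) ^+ 2 = 1 + z ^+ 2 + (z ^+ 2) ^+ 2.
  by rewrite !sqrrD_char2 expr1n.
rewrite (_ : 5 = 1 + 2 * 2)%N // exprD exprM sq sq -!exprM /=; ring.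
Qed.

End CharTwo.

Section CyclotomicBinomials.
Variable F : fieldType.

Lemma dvdp_Xn_sub1 (a b : nat) : (a %| b)%N -> ('X^a - 1 : {poly F}) %| 'X^b - 1.
Proof. by case/dvdnP=> t ->; rewrite mulnC exprM [_ ^+ t - 1]subrX1 dvdp_mulIl. Qed.

(* A common divisor of x^a - 1 and x^b - 1 divides x^(gcd a b) - 1
   (Bezout relation for the exponents). *)
Lemma dvdp_Xn_sub1_gcd (d : {poly F}) (a b : nat) : (0 < a)%N ->
  d %| 'X^a - 1 -> d %| 'X^b - 1 -> d %| 'X^(gcdn a b) - 1.
Proof.
move=> a_gt0 da db; case: (egcdnP b a_gt0) => u v Euv _.
have du : d %| 'X^(a * u) - 1 by exact: dvdp_trans da (dvdp_Xn_sub1 (dvdn_mulr _ (dvdnn a))).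
have dv : d %| 'X^(b * v) - 1 by exact: dvdp_trans db (dvdp_Xn_sub1 (dvdn_mulr _ (dvdnn b))).
have -> : ('X^(gcdn a b) - 1 : {poly F}) =
    ('X^(a * u) - 1) - 'X^(gcdn a b) * ('X^(b * v) - 1).
  by rewrite mulnC Euv exprD mulnC; ring.
by rewrite dvdp_sub // dvdp_mull.
Qed.

Lemma gcdp_Xn_sub1 (a b : nat) : (0 < a)%N ->
  gcdp ('X^a - 1 : {poly F}) ('X^b - 1) %= 'X^(gcdn a b) - 1.
Proof.
move=> a_gt0; apply/andP; split.
  by apply: dvdp_Xn_sub1_gcd; [|apply: dvdp_gcdl|apply: dvdp_gcdr].
by rewrite dvdp_gcd !dvdp_Xn_sub1 ?dvdn_gcdl ?dvdn_gcdr.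
Qed.

Lemma eqp_Xn_sub1 (a b : nat) : (0 < a)%N -> (0 < b)%N ->
  (('X^a - 1 : {poly F}) %= 'X^b - 1) = (a == b).
Proof.
move=> a_gt0 b_gt0; apply/idP/eqP => [/eqp_size|->]; last exact: eqpxx.
by rewrite !size_XnsubC // => -[].
Qed.

(* Every power of x is coprime to x^m - 1, as 0 is not a root of x^m - 1. *)
Lemma coprimep_Xn_Xn_sub1 (k m : nat) : (0 < m)%N ->
  coprimep ('X^k : {poly F}) ('X^m - 1).
Proof.
move=> m_gt0; apply: coprimep_expl; rewrite coprimep_sym coprimepX.
by rewrite rootE !hornerE expr0n eqn0Ngt m_gt0 /= sub0r oppr_eq0 oner_eq0.
Qed.

Lemma coprimep_congr (P Q M : {poly F}) :
  M %| P - Q -> coprimep P M = coprimep Q M.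
Proof.
move=> dPQ; rewrite -coprimep_modl -[RHS]coprimep_modl.
have -> : P = Q + (P - Q) by ring.
by rewrite modpD (eqP dPQ) addr0.
Qed.

Hypothesis two0 : (2%:R : F) = 0.

Lemma poly_two0 : (2%:R : {poly F}) = 0.
Proof. by rewrite -polyC_natr two0 polyC0. Qed.

(* y - 1 and 1 + y + y^2 are coprime: y (y - 1) + (1 + y + y^2) = 1 + 2 y = 1. *)
Lemma coprimep_sub1_trinomial (y : {poly F}) : coprimep (y - 1) (1 + y + y ^+ 2).
Proof.
apply/Bezout_coprimepP; exists (- y, 1) => /=.
have -> : - y * (y - 1) + 1 * (1 + y + y ^+ 2) = 1 + 2%:R * y by ring.
by rewrite poly_two0 mul0r addr0 eqpxx.
Qed.

Lemma coprimep_trinomial_Xn_sub1 (k m : nat) : (0 < k)%N -> (0 < m)%N ->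
  coprimep (1 + 'X^k + ('X^k) ^+ 2 : {poly F}) ('X^m - 1) =
  (gcdn m (3 * k) == gcdn m k).
Proof.
move=> k_gt0 m_gt0; set y : {poly F} := 'X^k; set B := 1 + y + y ^+ 2.
have yB : (y - 1) * B = 'X^(3 * k) - 1 by rewrite /B /y mulnC exprM; ring.
apply/idP/eqP => [coBM | Egcd].
  have coMB : coprimep ('X^m - 1) B by rewrite coprimep_sym.
  have gcd3 : gcdp ('X^m - 1) ('X^(3 * k) - 1) %= gcdp ('X^m - 1) (y - 1).
    by rewrite -yB; apply: Gauss_gcdpl.
  apply/eqP; rewrite -eqp_Xn_sub1 ?gcdn_gt0 ?m_gt0 //.
  have g3 := gcdp_Xn_sub1 (3 * k) m_gt0; rewrite eqp_sym in g3.
  exact: eqp_trans g3 (eqp_trans gcd3 (gcdp_Xn_sub1 k m_gt0)).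
apply/coprimepP => d dB dM.
have d3 : d %| 'X^(3 * k) - 1 by rewrite -yB dvdp_mull.
have dy : d %| y - 1.
  apply: dvdp_trans (dvdp_Xn_sub1_gcd m_gt0 dM d3) _.
  by rewrite Egcd dvdp_Xn_sub1 ?dvdn_gcdr.
by move/coprimepP: (coprimep_sub1_trinomial y); apply.
Qed.

End CyclotomicBinomials.

Lemma F2_two0 : (2%:R : 'F_2) = 0.
Proof. by apply/eqP. Qed.

Lemma cpoly_comp (m : nat) (p : {poly 'F_2}) : cpoly m \Po p =
  1 + p + p ^+ 3 + p ^+ 4 + p ^+ 5 +
  p ^+ (m - 1) + p ^+ (m - 3) + p ^+ (m - 4) + p ^+ (m - 5).
Proof.
rewrite /cpoly !big_cons big_nil.
by rewrite !(comp_polyD, comp_polyC, comp_Xn_poly) polyC1 addr0; ring.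
Qed.

Lemma cpoly_comp_congr (m : nat) (p : {poly 'F_2}) : (5 <= m)%N ->
  p ^+ 5 * (cpoly m \Po p) - (1 + p + p ^+ 2) ^+ 5 =
  (p ^+ 4 + p ^+ 2 + p + 1) * (p ^+ m - 1).
Proof.
move=> m_ge5; rewrite cpoly_comp (trinomial_pow5 (poly_two0 F2_two0)).
have [n ->] : exists n, m = (n + 5)%N by exists (m - 5)%N; lia.
have -> : (n + 5 - 1 = n + 4)%N by lia.
have -> : (n + 5 - 3 = n + 2)%N by lia.
have -> : (n + 5 - 4 = n + 1)%N by lia.
have -> : (n + 5 - 5 = n)%N by lia.
rewrite !exprD; ring.
Qed.

Lemma coprimep_cpoly_comp (k m : nat) : (5 <= m)%N ->
  coprimep (cpoly m \Po 'X^k) ('X^m - 1) =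
  coprimep (1 + 'X^k + ('X^k) ^+ 2) ('X^m - 1 : {poly 'F_2}).
Proof.
move=> m_ge5; have m_gt0 : (0 < m)%N by lia.
have coXM := coprimep_Xn_Xn_sub1 'F_2 (k * 5) m_gt0.
rewrite -[LHS]andTb -coXM exprM -coprimepMl -[RHS](@coprimep_pexpl _ 5) //.
apply: coprimep_congr; rewrite cpoly_comp_congr // dvdp_mull // -exprM.
by rewrite dvdp_Xn_sub1 // dvdn_mull.
Qed.

Theorem proposition3 (m k : nat) (hm : (11 <= m)%N) (hk : (1 <= k)%N) :
  coprimep (cpoly m \Po 'X^k) ('X^m - 1) <-> gcdn m (3 * k) = gcdn m k.
Proof.
rewrite coprimep_cpoly_comp; last by lia.
rewrite (coprimep_trinomial_Xn_sub1 F2_two0) //; last by lia.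
by split => /eqP.
Qed.
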